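(* Let $d$ be a prime and let $\{M_i\}_{i=1}^{d+1}$ be a complete set of $d+1$ pairwise mutually unbiased orthonormal bases of $\mathbb{C}^d$. Assume the extended CQC (ECQC) conjecture holds for this set, i.e. for every state $\sigma_{AB}$ on $\mathbb{C}^d\otimes\mathbb{C}^d$, $$I(A:B)\ \ge\ \min_{\mathcal{S}\subseteq\{1,\dots,d+1\},\,|\mathcal{S}|=d}\ \sum_{i\in\mathcal{S}} I(M_i^A:M_i^B).$$ Then every state $\rho_{AB}$ on $\mathbb{C}^d\otimes\mathbb{C}^d$ satisfies $$\sum_{i=1}^{d+1}H(M_i^AM_i^B)\ \ge\ 2\big((d+1)(\log(d)-1)\big)-I(A:B)-I_{\max}(M^A:M^B),$$ where $I_{\max}(M^A:M^B)=\max_{1\le i\le d+1} I(M_i^A:M_i^B)$.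
   Context: All logarithms are base 2 and $0\log0=0$. Bases $\{|z_i\rangle\}$, $\{|x_j\rangle\}$ of $\mathbb{C}^d$ are mutually unbiased if $|\langle z_i|x_j\rangle|^2=1/d$ for all $i,j$. $H(AB)$, $H(A)$, $H(B)$ are von Neumann entropies of $\rho_{AB}$ and its marginals, $I(A:B)=H(A)+H(B)-H(AB)$. For a basis $M_i=\{|m_j\rangle\}$, $M_i^A,M_i^B$ are the classical outcomes when both parties measure their subsystem in $M_i$, with joint distribution $p(j,k)=\langle m_j\otimes m_k|\rho_{AB}|m_j\otimes m_k\rangle$; $H(M_i^AM_i^B)$ is its Shannon entropy and $I(M_i^A:M_i^B)=H(M_i^A)+H(M_i^B)-H(M_i^AM_i^B)$. *)

From HB Require Import structures.
From mathcomp Require Import all_boot all_order all_algebra.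
From mathcomp Require Import boolp classical_sets reals exp.
From mathcomp Require Import complex mxtens.
Set Implicit Arguments. Unset Strict Implicit. Unset Printing Implicit Defensive.
Import Order.TTheory GRing.Theory Num.Theory.
Local Open Scope ring_scope.

Section QDefs.
Variable R : realType.
Local Notation C := R[i].

(* logarithm base 2; ln x = 0 for x <= 0 in mathcomp-analysis *)
Definition log2 (x : R) : R := ln x / ln 2.
(* eta x = - x log x, with 0 log 0 = 0 *)
Definition eta (x : R) : R := - (x * log2 x).

Definition adjmx m n (A : 'M[C]_(m, n)) : 'M[C]_(n, m) := (map_mx Num.conj A)^T.

Definition is_state n (rho : 'M[C]_n) : Prop :=
  adjmx rho = rho /\
  (forall v : 'cV[C]_n, 0 <= (adjmx v *m rho *m v) 0 0) /\
  \tr rho = 1.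

(* an orthonormal basis of C^d, given by the unitary matrix whose
   j-th column is |m_j> *)
Definition onbasis d (U : 'M[C]_d) : Prop := adjmx U *m U = 1%:M.

Definition mub d (Z X : 'M[C]_d) : Prop :=
  forall i j : 'I_d, `|(adjmx Z *m X) i j| ^+ 2 = (d%:R)^-1.

Definition complete_mub d (M : 'I_d.+1 -> 'M[C]_d) : Prop :=
  (forall i, onbasis (M i)) /\ (forall i i', i != i' -> mub (M i) (M i')).

(* index of |a> (x) |b> in C^d (x) C^d = C^(d*d) *)
Definition tidx d (a b : 'I_d) : 'I_(d * d) := mxtens_index (a, b).

Definition ptrB d (rho : 'M[C]_(d * d)) : 'M[C]_d :=
  \matrix_(a, a') \sum_(b < d) rho (tidx a b) (tidx a' b).
Definition ptrA d (rho : 'M[C]_(d * d)) : 'M[C]_d :=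
  \matrix_(b, b') \sum_(a < d) rho (tidx a b) (tidx a b').

(* eigenvalues (with multiplicity) : a vector lam with
   char_poly A = prod_i (X - lam_i); chosen classically *)
Definition eigvals n (A : 'M[C]_n) : 'rV[C]_n :=
  xget 0 [set lam : 'rV[C]_n | char_poly A = \prod_(i < n) ('X - (lam 0 i)%:P)].

Definition vN n (rho : 'M[C]_n) : R := \sum_(i < n) eta (complex.Re (eigvals rho 0 i)).

Definition HAB d (rho : 'M[C]_(d * d)) : R := vN rho.
Definition HA d (rho : 'M[C]_(d * d)) : R := vN (ptrB rho).
Definition HB d (rho : 'M[C]_(d * d)) : R := vN (ptrA rho).
Definition qmutinf d (rho : 'M[C]_(d * d)) : R := HA rho + HB rho - HAB rho.

(* joint outcome distribution when both parties measure in basis U: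
   p(j,k) = <m_j (x) m_k | rho | m_j (x) m_k> *)
Definition pjoint d (U : 'M[C]_d) (rho : 'M[C]_(d * d)) (j k : 'I_d) : R :=
  complex.Re (\sum_(a < d) \sum_(b < d) \sum_(a' < d) \sum_(b' < d)
     (Num.conj (U a j) * Num.conj (U b k) * rho (tidx a b) (tidx a' b')
        * U a' j * U b' k)).

Definition HMM d (U : 'M[C]_d) (rho : 'M[C]_(d * d)) : R :=
  \sum_(j < d) \sum_(k < d) eta (pjoint U rho j k).
Definition HMA d (U : 'M[C]_d) (rho : 'M[C]_(d * d)) : R :=
  \sum_(j < d) eta (\sum_(k < d) pjoint U rho j k).
Definition HMB d (U : 'M[C]_d) (rho : 'M[C]_(d * d)) : R :=
  \sum_(k < d) eta (\sum_(j < d) pjoint U rho j k).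
Definition cmutinf d (U : 'M[C]_d) (rho : 'M[C]_(d * d)) : R :=
  HMA U rho + HMB U rho - HMM U rho.

(* min over S subset of {1..d+1} with |S| = d of sum_{i in S} I(M_i^A:M_i^B);
   the default of the iterated min is itself one of the terms
   (S = all indices but the last) *)
Definition minS d (M : 'I_d.+1 -> 'M[C]_d) (rho : 'M[C]_(d * d)) : R :=
  \big[Num.min/ \sum_(i in [set i : 'I_d.+1 | i != ord_max]) cmutinf (M i) rho]_(S : {set 'I_d.+1} | #|S| == d)
     \sum_(i in S) cmutinf (M i) rho.

(* I_max = max_i I(M_i^A:M_i^B); the default is one of the terms *)
Definition Imax d (M : 'I_d.+1 -> 'M[C]_d) (rho : 'M[C]_(d * d)) : R :=
  \big[Num.max/cmutinf (M ord0) rho]_(i < d.+1) cmutinf (M i) rho.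

Definition ECQC d (M : 'I_d.+1 -> 'M[C]_d) : Prop :=
  forall sigma : 'M[C]_(d * d), is_state sigma -> qmutinf sigma >= minS M sigma.

End QDefs.

From Pilot Require Import Defs.
From HB Require Import structures.
From mathcomp Require Import all_boot all_order all_algebra.
From mathcomp Require Import boolp classical_sets reals exp sequences.
From mathcomp Require Import complex mxtens.
From mathcomp Require Import ring lra.
Import Order.TTheory GRing.Theory Num.Theory.
Set Implicit Arguments. Unset Strict Implicit. Unset Printing Implicit Defensive.
Local Open Scope ring_scope.
Local Notation "x %:C" := (real_complex _ x) : ring_scope.

(* Since H(M_i^A M_i^B) = H(M_i^A) + H(M_i^B) - I(M_i^A : M_i^B), the bound
   splits in three.  Applying ECQC to the set S that omits an index of maximal
   I(M_i^A : M_i^B) gives sum_i I(M_i^A : M_i^B) - I_max <= I(A : B).  For a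
   marginal state sigma with outcome probabilities p_ij in the d + 1 bases, the
   rank-one projectors onto the basis vectors have Hilbert-Schmidt Gram matrix
   equal to the identity within a basis and to 1/d across bases; a Bessel-type
   argument then gives sum_ij p_ij^2 <= tr sigma^2 + (d + 1)/d <= (2d + 1)/d.
   With the tangent bound -p ln p >= p (1 - ln a) - p^2/a at a = 2/d this yields
   sum_i H(M_i^A) >= (d + 1)(log d - 1), and likewise for B.  Primality of d is
   only used through d >= 2. *)

Lemma sumr_mul_delta (T : pzRingType) (I : finType) (F : I -> T) (x : I) :
  \sum_y F y * (y == x)%:R = F x.
Proof.
rewrite (bigD1 x) //= eqxx mulr1 big1 ?addr0 // => y /negbTE ->; exact: mulr0.
Qed.

Section Scalars.
Variable R : realType.
Local Notation C := R[i].

Lemma Re_conjc (x : C) : complex.Re x^* = complex.Re x.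
Proof. by case: x. Qed.

Lemma conjC_real (r : R) : (r%:C : C)^* = r%:C.
Proof. exact: conjc_real. Qed.

Lemma Re_realM (r : R) (x : C) : complex.Re (r%:C * x) = r * complex.Re x.
Proof. by case: x => a b /=; rewrite !mul0r subr0. Qed.

Lemma ge0_ReE (x : C) : 0 <= x -> 0 <= complex.Re x /\ x = (complex.Re x)%:C.
Proof. by case: x => a b; rewrite lecE /= => /andP[/eqP -> ->]. Qed.

Lemma ln_le_subr1 (x : R) : 0 < x -> ln x <= x - 1.
Proof. by move=> x_gt0; have := expR_ge1Dx (ln x); rewrite lnK ?posrE //; lra. Qed.

(* The tangent-line bound [ln (p / a) <= p / a - 1], multiplied by [p]. *)
Lemma eta_ge_tangent (a p : R) : 0 < a -> a <= 1 ->
  p * (1 - ln a) - p ^+ 2 / a <= ln 2 * Defs.eta p.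
Proof.
move=> a_gt0 a_le1; have ln2_gt0 : 0 < ln (2 : R) by rewrite ln_gt0 ?ltr1n.
have ln_a_le0 : ln a <= 0 by exact: ln_le0.
rewrite /Defs.eta /log2; have [p_le0|p_gt0] := lerP p 0.
  rewrite (ln0 p_le0) mul0r mulr0 oppr0 mulr0.
  have : p * (1 - ln a) <= 0 by rewrite mulr_le0_ge0 //; lra.
  have : 0 <= p ^+ 2 / a by rewrite divr_ge0 ?sqr_ge0 // ltW.
  lra.
have := ln_le_subr1 (divr_gt0 p_gt0 a_gt0); rewrite ln_div ?posrE // => ln_pa.
have -> : ln 2 * - (p * (ln p / ln 2)) = - (p * ln p) by field; rewrite gt_eqF.
have -> : p ^+ 2 / a = p * (p / a) by rewrite expr2 mulrA.
have : p * (ln p - ln a) <= p * (p / a - 1) by rewrite ler_pM2l.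
lra.
Qed.

(* Discriminant argument; when [a = 0] the polynomial is linear in [t] and
   nonnegativity forces [m = 0]. *)
Lemma quadratic_ge0_le (a b m : R) : 0 <= a -> 0 <= b -> 0 <= m ->
  (forall t, 0 <= a * t ^+ 2 - 2 * t * m + b * m) -> m <= a * b.
Proof.
move=> a_ge0 b_ge0 m_ge0 q_ge0; have [a_gt0|] := ltrP 0 a; last first.
  move=> a_le0; have a0 : a = 0 by apply/eqP; rewrite eq_le a_le0 a_ge0.
  have := q_ge0 (b + 1); rewrite a0 !mul0r; nra.
have := q_ge0 (m / a); have -> : a * (m / a) ^+ 2 - 2 * (m / a) * m + b * m =
    m * (a * b - m) / a by field; rewrite gt_eqF.
rewrite pmulr_lge0 ?invr_gt0 //; have : 0 <= a * b by rewrite mulr_ge0.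
nra.
Qed.

End Scalars.

Section QuadraticForms.
Variable R : realType.
Local Notation C := R[i].
Variable n : nat.
Implicit Types (A : 'M[C]_n) (v : 'I_n -> C).

Definition qform A v := \sum_a \sum_b (v a)^* * A a b * v b.
Definition psdmx A := forall v, 0 <= qform A v.
Definition hermmx A := forall x y, A y x = (A x y)^*.

Lemma qform_mx A (v : 'cV[C]_n) :
  (adjmx v *m A *m v) 0 0 = qform A (fun a => v a 0).
Proof.
rewrite mxE /qform; under eq_bigr do rewrite mxE mulr_suml.
rewrite exchange_big /=; apply: eq_bigr => a _; apply: eq_bigr => b _.
by rewrite /adjmx !mxE.
Qed.

Lemma is_stateP A : is_state A <-> [/\ hermmx A, psdmx A & \tr A = 1].
Proof.
split=> [[hA [pA trA]]|[hA pA trA]].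
  split=> // [x y|v]; first by rewrite -{1}hA /adjmx !mxE.
  by have := pA (\col_a v a); rewrite qform_mx; under eq_fun do rewrite mxE.
split; last by split=> // v; rewrite qform_mx.
by apply/matrixP => x y; rewrite /adjmx !mxE hA.
Qed.

Lemma qform_pair A x y s w :
  qform A (fun k => (k == x)%:R * s + (k == y)%:R * w) =
  s^* * (s * A x x + w * A x y) + w^* * (s * A y x + w * A y y).
Proof.
have sum_pair (s' w' : C) (G : 'I_n -> C) :
    \sum_a ((a == x)%:R * s' + (a == y)%:R * w') * G a = s' * G x + w' * G y.
  under eq_bigr do rewrite mulrDl -!mulrA ![(_ == _)%:R * _]mulrC.
  by rewrite big_split /= !sumr_mul_delta.
rewrite /qform.
under eq_bigr do under eq_bigr do rewrite -mulrA [A _ _ * _]mulrC.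
under eq_bigr do rewrite -mulr_sumr sum_pair rmorphD !rmorphM !rmorph_nat.
by rewrite sum_pair; congr (_ * _ + _ * _); ring.
Qed.

Lemma psdmx_diag_ge0 A x : psdmx A -> 0 <= A x x.
Proof.
move=> pA; have := pA (fun k => (k == x)%:R * 1 + (k == x)%:R * 0).
by rewrite qform_pair rmorph0 !mul0r !addr0 rmorph1 !mul1r.
Qed.

(* Evaluate the form at [t e_x - A_yx e_y] for real [t]. *)
Lemma psdmx_minor A x y : hermmx A -> psdmx A ->
  complex.Re ((A x y)^* * A x y) <= complex.Re (A x x) * complex.Re (A y y).
Proof.
move=> hA pA; set z := A x y.
have [a_ge0 Ea] := ge0_ReE (psdmx_diag_ge0 x pA).
have [b_ge0 Eb] := ge0_ReE (psdmx_diag_ge0 y pA).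
have [m_ge0 Em] := ge0_ReE (mul_conjC_ge0 z).
set a := complex.Re (A x x) in a_ge0 Ea *; set b := complex.Re (A y y) in b_ge0 Eb *.
rewrite [z^* * z]mulrC; set m := complex.Re (z * z^*) in m_ge0 Em *.
apply: quadratic_ge0_le => // t.
have := pA (fun k => (k == x)%:R * t%:C + (k == y)%:R * - A y x).
rewrite qform_pair (hA x y) -/z rmorphN /= conjCK conjC_real Ea Eb.
have -> : t%:C * (t%:C * a%:C + - z^* * z) + - z * (t%:C * z^* + - z^* * b%:C) =
    t%:C * t%:C * a%:C - 2%:R * t%:C * (z * z^*) + b%:C * (z * z^*) by ring.
rewrite Em; have -> : t%:C * t%:C * a%:C - 2%:R * t%:C * m%:C + b%:C * m%:C =
    (a * (t * t) - 2 * t * m + b * m)%:C.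
  by rewrite rmorphD rmorphB !rmorphM rmorph_nat; ring.
by rewrite ler0c expr2.
Qed.

End QuadraticForms.

Section HilbertSchmidt.
Variable R : realType.
Local Notation C := R[i].
Variable n : nat.
Implicit Types X Y Z : 'I_n -> 'I_n -> C.

Definition hsdot X Y := \sum_a \sum_b (X a b)^* * Y a b.

Lemma hsdotC X Y : hsdot Y X = (hsdot X Y)^*.
Proof.
rewrite /hsdot rmorph_sum; apply: eq_bigr => a _.
by rewrite rmorph_sum; apply: eq_bigr => b _; rewrite rmorphM /= conjCK mulrC.
Qed.

Lemma Re_hsdot_ge0 X : 0 <= complex.Re (hsdot X X).
Proof.
rewrite /hsdot raddf_sum sumr_ge0 // => a _; rewrite raddf_sum sumr_ge0 // => b _.
by rewrite mulrC; case: (ge0_ReE (mul_conjC_ge0 (X a b))).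
Qed.

Lemma hsdotBl X Y Z : hsdot (fun a b => X a b - Y a b) Z = hsdot X Z - hsdot Y Z.
Proof.
rewrite /hsdot -sumrB; apply: eq_bigr => a _; rewrite -sumrB.
by apply: eq_bigr => b _; rewrite rmorphB mulrBl.
Qed.

Lemma hsdotBr X Y Z : hsdot X (fun a b => Y a b - Z a b) = hsdot X Y - hsdot X Z.
Proof.
rewrite /hsdot -sumrB; apply: eq_bigr => a _; rewrite -sumrB.
by apply: eq_bigr => b _; rewrite mulrBr.
Qed.

Lemma hsdot_sumr (I : finType) X (c : I -> R) (F : I -> 'I_n -> 'I_n -> C) :
  hsdot X (fun a b => \sum_k (c k)%:C * F k a b) = \sum_k (c k)%:C * hsdot X (F k).
Proof.
rewrite /hsdot; under eq_bigr do under eq_bigr do rewrite mulr_sumr.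
under [RHS]eq_bigr do rewrite mulr_sumr.
under [RHS]eq_bigr do under eq_bigr do rewrite mulr_sumr.
rewrite exchange_big /=; under eq_bigr do rewrite exchange_big /=.
rewrite exchange_big /=; apply: eq_bigr => k _; rewrite exchange_big /=.
by apply: eq_bigr => a _; apply: eq_bigr => b _; rewrite mulrCA.
Qed.

Lemma hsdot_suml (I : finType) X (c : I -> R) (F : I -> 'I_n -> 'I_n -> C) :
  hsdot (fun a b => \sum_k (c k)%:C * F k a b) X = \sum_k (c k)%:C * hsdot (F k) X.
Proof.
rewrite hsdotC hsdot_sumr rmorph_sum; apply: eq_bigr => k _.
by rewrite rmorphM /= conjC_real -hsdotC.
Qed.

(* Summing the 2x2 minor bounds gives [tr A^2 <= (tr A)^2]. *)
Lemma state_purity (A : 'M[C]_n) : is_state A -> complex.Re (hsdot A A) <= 1.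
Proof.
case/is_stateP=> hA pA trA; rewrite /hsdot raddf_sum.
under eq_bigr do rewrite raddf_sum.
apply: le_trans (_ : \sum_a \sum_b complex.Re (A a a) * complex.Re (A b b) <= 1).
  by apply: ler_sum => a _; apply: ler_sum => b _; exact: psdmx_minor.
by rewrite -big_distrlr /= -raddf_sum -/(\tr A) trA mulr1.
Qed.

End HilbertSchmidt.

Section MutuallyUnbiased.
Variable R : realType.
Local Notation C := R[i].
Variable d : nat.
Implicit Types (V W A : 'M[C]_d).

Definition prob V A j := complex.Re (qform A (fun a => V a j)).
Definition basis_proj V j : 'I_d -> 'I_d -> C := fun a b => V a j * (V b j)^*.

Lemma onbasis_rows V a b : onbasis V -> \sum_j V a j * (V b j)^* = (a == b)%:R.
Proof.
move=> onbV; have := congr1 (fun M : 'M[C]_d => M a b) (mulmx1C onbV).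
by rewrite !mxE => <-; apply: eq_bigr => j _; rewrite /adjmx !mxE.
Qed.

Lemma sum_prob V A : onbasis V -> \tr A = 1 -> \sum_j prob V A j = 1.
Proof.
move=> onbV trA; rewrite /prob /qform -raddf_sum exchange_big /=.
under eq_bigr do rewrite exchange_big /=.
under eq_bigr do under eq_bigr do
  (under eq_bigr do rewrite mulrC mulrA; rewrite -mulr_suml mulrC onbasis_rows //).
by under eq_bigr do rewrite sumr_mul_delta; rewrite -/(\tr A) trA.
Qed.

Lemma Re_hsdot_basis_proj A V j : complex.Re (hsdot A (basis_proj V j)) = prob V A j.
Proof.
rewrite hsdotC Re_conjc /prob /hsdot /qform; congr complex.Re.
apply: eq_bigr => a _; apply: eq_bigr => b _.
by rewrite /basis_proj rmorphM /= conjCK; ring.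
Qed.

Lemma hsdot_basis_proj V W j k :
  hsdot (basis_proj V j) (basis_proj W k) = (adjmx V *m W) j k * ((adjmx V *m W) j k)^*.
Proof.
have -> : (adjmx V *m W) j k = \sum_a (V a j)^* * W a k.
  by rewrite mxE; apply: eq_bigr => a _; rewrite /adjmx !mxE.
rewrite /hsdot rmorph_sum mulr_suml; apply: eq_bigr => a _.
rewrite mulr_sumr; apply: eq_bigr => b _.
by rewrite /basis_proj !rmorphM /= !conjCK; ring.
Qed.

Section CompleteMUB.
Variable U : 'I_d.+1 -> 'M[C]_d.
Hypotheses (d_gt0 : (0 < d)%N) (U_onb : forall i, onbasis (U i))
  (U_mub : forall i i', i != i' -> mub (U i) (U i')).

Lemma Re_hsdot_mub i i' j j' :
  complex.Re (hsdot (basis_proj (U i) j) (basis_proj (U i') j')) =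
  if i == i' then (j == j')%:R else d%:R^-1.
Proof.
rewrite hsdot_basis_proj; have [<-|neq_ii'] := eqVneq i i'.
  by rewrite (U_onb i) mxE rmorph_nat -natrM mulnb andbb; case: (j == j').
have dV : (d%:R^-1 : C) = (d%:R^-1 : R)%:C by rewrite fmorphV rmorph_nat.
by rewrite -normCK (U_mub neq_ii') dV.
Qed.

Definition mub_comb (c : 'I_d.+1 * 'I_d -> R) a b :=
  \sum_k (c k)%:C * basis_proj (U k.1) k.2 a b.

(* Cross-basis overlaps all equal [1/d], so they cancel against rows of [c]
   summing to zero, and the Gram matrix acts as the identity. *)
Lemma Re_hsdot_mub_comb c : (forall i, \sum_j c (i, j) = 0) ->
  complex.Re (hsdot (mub_comb c) (mub_comb c)) = \sum_k c k ^+ 2.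
Proof.
move=> c_row0; rewrite hsdot_suml raddf_sum; apply: eq_bigr => -[i j] _.
rewrite /= Re_realM hsdot_sumr raddf_sum /= expr2; congr (_ * _).
under eq_bigr do rewrite Re_realM Re_hsdot_mub.
have -> : \sum_k c k * (if i == k.1 then (j == k.2)%:R else d%:R^-1) =
    \sum_i' \sum_j' c (i', j') * (if i == i' then (j == j')%:R else d%:R^-1).
  by rewrite pair_bigA; apply: eq_bigr => -[].
rewrite (bigD1 i) //= eqxx [X in _ + X]big1 ?addr0 => [|i' neq_i'i].
  by under eq_bigr do rewrite eq_sym; rewrite sumr_mul_delta.
by rewrite eq_sym (negbTE neq_i'i) -mulr_suml c_row0 mul0r.
Qed.

(* Expand [0 <= |A - W|^2] for [W = sum_ij (p_ij - 1/d) P_ij]. *)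
Lemma mub_bessel A : \tr A = 1 ->
  \sum_i \sum_j prob (U i) A j ^+ 2 <= complex.Re (hsdot A A) + d.+1%:R / d%:R.
Proof.
move=> trA; set e := (d%:R : R)^-1.
have de : d%:R * e = 1 by rewrite divff // pnatr_eq0 -lt0n.
pose c (k : 'I_d.+1 * 'I_d) := prob (U k.1) A k.2 - e.
have c_row0 i : \sum_j c (i, j) = 0.
  by rewrite /c sumrB /= sum_prob // sumr_const card_ord -mulr_natl de subrr.
have Ap_ge0 := Re_hsdot_ge0 (fun a b => A a b - mub_comb c a b).
rewrite hsdotBl !hsdotBr !raddfB /= Re_hsdot_mub_comb // in Ap_ge0.
have AW : complex.Re (hsdot A (mub_comb c)) = \sum_k c k * prob (U k.1) A k.2.
  rewrite hsdot_sumr raddf_sum; apply: eq_bigr => k _.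
  by rewrite /= Re_realM Re_hsdot_basis_proj.
rewrite [hsdot (mub_comb c) A]hsdotC Re_conjc AW in Ap_ge0.
rewrite pair_bigA /=.
have -> : \sum_(k : 'I_d.+1 * 'I_d) prob (U k.1) A k.2 ^+ 2 =
    \sum_k (2 * (c k * prob (U k.1) A k.2) - c k ^+ 2) + \sum_(k : 'I_d.+1 * 'I_d) e ^+ 2.
  by rewrite -big_split /=; apply: eq_bigr => k _; rewrite /c; ring.
rewrite sumrB -mulr_sumr sumr_const card_prod !card_ord.
have -> : e ^+ 2 *+ (d.+1 * d) = d.+1%:R / d%:R.
  by rewrite -mulr_natr natrM /e; field; rewrite pnatr_eq0 -lt0n.
by rewrite -/e; lra.
Qed.

End CompleteMUB.

(* Sum the tangent bound at [a = 2 / d] and control the quadratic term by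
   [mub_bessel] and purity: [sum p_ij ^ 2 <= 1 + (d + 1) / d]. *)
Lemma mub_entropy_bound (U : 'I_d.+1 -> 'M[C]_d) A : (1 < d)%N ->
  (forall i, onbasis (U i)) -> (forall i i', i != i' -> mub (U i) (U i')) ->
  is_state A ->
  d.+1%:R * (log2 d%:R - 1) <= \sum_i \sum_j Defs.eta (prob (U i) A j).
Proof.
move=> d_gt1 U_onb U_mub stA; have pur := state_purity stA.
have {stA} [_ _ trA] := (is_stateP A).1 stA.
have d_gt0 : (0 < d)%N by exact: ltnW.
set D := (d%:R : R); have D_ge2 : 2 <= D by rewrite /D ler_nat.
have ln2_gt0 : 0 < ln (2 : R) by rewrite ln_gt0 ?ltr1n.
set a := 2 / D; have a_gt0 : 0 < a by rewrite divr_gt0 //; lra.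
have a_le1 : a <= 1 by rewrite ler_pdivrMr ?mul1r //; lra.
have ln_a : ln a = ln 2 - ln D by rewrite ln_div ?posrE //; lra.
set S := \sum_i \sum_j prob (U i) A j ^+ 2.
have S_le : S / a <= (2 * D + 1) / 2.
  have := mub_bessel d_gt0 U_onb U_mub trA; rewrite -/S -addn1 natrD -/D => bes.
  have -> : S / a = S * (D / 2) by rewrite /a; field; lra.
  have -> : (2 * D + 1) / 2 = (1 + (D + 1) / D) * (D / 2) by field; lra.
  by rewrite ler_pM2r; lra.
have tangent : \sum_i \sum_j (prob (U i) A j * (1 - ln a) - prob (U i) A j ^+ 2 / a)
    <= ln 2 * \sum_i \sum_j Defs.eta (prob (U i) A j).
  rewrite mulr_sumr; apply: ler_sum => i _; rewrite mulr_sumr.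
  by apply: ler_sum => j _; exact: eta_ge_tangent.
have sum_tangent :
    \sum_i \sum_j (prob (U i) A j * (1 - ln a) - prob (U i) A j ^+ 2 / a) =
    d.+1%:R * (1 - ln a) - S / a.
  under eq_bigr do rewrite sumrB -!mulr_suml sum_prob // mul1r.
  by rewrite sumrB sumr_const card_ord -mulr_suml mulr_natl.
rewrite sum_tangent in tangent.
have -> : d.+1%:R * (log2 D - 1) = d.+1%:R * (ln D - ln 2) / ln 2.
  by rewrite /log2; field; lra.
rewrite ler_pdivrMr // [_ * ln 2]mulrC; apply: le_trans tangent.
rewrite ln_a -addn1 natrD -/D; lra.
Qed.

End MutuallyUnbiased.

Section PartialTraces.
Variable R : realType.
Local Notation C := R[i].

Lemma sum_pushforward n m (g : 'I_m -> 'I_n) (F : 'I_n -> C) (v : 'I_m -> C) :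
  \sum_l F l * \sum_b (l == g b)%:R * v b = \sum_b F (g b) * v b.
Proof.
under eq_bigr do rewrite mulr_sumr; rewrite exchange_big /=.
apply: eq_bigr => b _; under eq_bigr do rewrite mulrCA mulrC.
exact: sumr_mul_delta.
Qed.

Lemma qform_pushforward n m (A : 'M[C]_n) (g : 'I_m -> 'I_n) (v : 'I_m -> C) :
  qform A (fun k => \sum_a (k == g a)%:R * v a) =
  \sum_a \sum_b (v a)^* * A (g a) (g b) * v b.
Proof.
rewrite /qform; under eq_bigr do rewrite -(eq_bigr _ (fun _ _ => mulrA _ _ _)) -mulr_sumr.
have conj_pushforward l : (\sum_a (l == g a)%:R * v a)^* = \sum_a (l == g a)%:R * (v a)^*.
  by rewrite rmorph_sum; apply: eq_bigr => a _; rewrite rmorphM rmorph_nat.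
under eq_bigr do rewrite sum_pushforward mulrC conj_pushforward.
rewrite sum_pushforward; apply: eq_bigr => a _.
by rewrite mulrC mulr_sumr; apply: eq_bigr => b _; rewrite mulrA.
Qed.

Definition sum_submx k m n (g : 'I_k -> 'I_m -> 'I_n) (A : 'M[C]_n) : 'M[C]_m :=
  \matrix_(x, y) \sum_b A (g b x) (g b y).

Lemma hermmx_sum_submx k m n (g : 'I_k -> 'I_m -> 'I_n) (A : 'M[C]_n) :
  hermmx A -> hermmx (sum_submx g A).
Proof.
by move=> hA x y; rewrite !mxE rmorph_sum; apply: eq_bigr => b _; exact: hA.
Qed.

Lemma psdmx_sum_submx k m n (g : 'I_k -> 'I_m -> 'I_n) (A : 'M[C]_n) :
  psdmx A -> psdmx (sum_submx g A).
Proof.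
move=> pA v; have -> : qform (sum_submx g A) v =
    \sum_b qform A (fun l => \sum_x (l == g b x)%:R * v x).
  under [RHS]eq_bigr do rewrite qform_pushforward.
  rewrite /qform [RHS]exchange_big; apply: eq_bigr => x _ /=.
  rewrite [RHS]exchange_big; apply: eq_bigr => y _.
  by rewrite mxE mulr_sumr mulr_suml.
by apply: sumr_ge0 => b _; exact: pA.
Qed.

Lemma sum_tidx d (F : 'I_(d * d) -> C) : \sum_k F k = \sum_a \sum_b F (tidx a b).
Proof.
rewrite pair_bigA /= (reindex (@mxtens_index d d)) /=; first by apply: eq_bigr => -[].
by exists (@mxtens_unindex d d) => ? _; [exact: mxtens_indexK | exact: mxtens_unindexK].
Qed.

Lemma ptrB_state d (rho : 'M[C]_(d * d)) : is_state rho -> is_state (ptrB rho).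
Proof.
case/is_stateP=> hA pA trA; apply/is_stateP; split.
- exact: (hermmx_sum_submx (fun b a => tidx a b)).
- exact: (psdmx_sum_submx (fun b a => tidx a b)).
- by rewrite -trA /mxtrace sum_tidx; apply: eq_bigr => a _; rewrite mxE.
Qed.

Lemma ptrA_state d (rho : 'M[C]_(d * d)) : is_state rho -> is_state (ptrA rho).
Proof.
case/is_stateP=> hA pA trA; apply/is_stateP; split.
- exact: (hermmx_sum_submx (fun a b => tidx a b)).
- exact: (psdmx_sum_submx (fun a b => tidx a b)).
- by rewrite -trA /mxtrace sum_tidx exchange_big; apply: eq_bigr => b _; rewrite mxE.
Qed.

End PartialTraces.

Section Marginals.
Variable R : realType.
Local Notation C := R[i].
Variables (d : nat) (U : 'M[C]_d) (rho : 'M[C]_(d * d)).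
Hypothesis U_onb : onbasis U.

Lemma pjoint_sumr j : \sum_k pjoint U rho j k = prob U (ptrB rho) j.
Proof.
rewrite /pjoint /prob /qform -raddf_sum; congr complex.Re.
rewrite exchange_big; under eq_bigr do rewrite exchange_big /=.
under eq_bigr do under eq_bigr do rewrite exchange_big /=.
under eq_bigr do under eq_bigr do under eq_bigr do rewrite exchange_big /=.
have sum_k a b a' b' :
    \sum_k (U a j)^* * (U b k)^* * rho (tidx a b) (tidx a' b') * U a' j * U b' k =
    (U a j)^* * rho (tidx a b) (tidx a' b') * U a' j * (b' == b)%:R.
  by rewrite -(onbasis_rows _ _ U_onb) mulr_sumr; apply: eq_bigr => k _; ring.
under eq_bigr do under eq_bigr do under eq_bigr do under eq_bigr do rewrite sum_k.
under eq_bigr do under eq_bigr do under eq_bigr do rewrite sumr_mul_delta.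
under [RHS]eq_bigr do under eq_bigr do rewrite mxE mulr_sumr mulr_suml.
by under [RHS]eq_bigr do rewrite exchange_big /=.
Qed.

Lemma pjoint_suml k : \sum_j pjoint U rho j k = prob U (ptrA rho) k.
Proof.
rewrite /pjoint /prob /qform -raddf_sum; congr complex.Re.
rewrite exchange_big; under eq_bigr do rewrite exchange_big /=.
under eq_bigr do under eq_bigr do rewrite exchange_big /=.
under eq_bigr do under eq_bigr do under eq_bigr do rewrite exchange_big /=.
have sum_j a b a' b' :
    \sum_j (U a j)^* * (U b k)^* * rho (tidx a b) (tidx a' b') * U a' j * U b' k =
    (U b k)^* * rho (tidx a b) (tidx a' b') * U b' k * (a' == a)%:R.
  by rewrite -(onbasis_rows _ _ U_onb) mulr_sumr; apply: eq_bigr => j _; ring.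
under eq_bigr do under eq_bigr do under eq_bigr do under eq_bigr do rewrite sum_j.
under eq_bigr do under eq_bigr do rewrite exchange_big /=.
under eq_bigr do under eq_bigr do under eq_bigr do rewrite sumr_mul_delta.
under [RHS]eq_bigr do under eq_bigr do rewrite mxE mulr_sumr mulr_suml.
by under [RHS]eq_bigr do rewrite exchange_big /=; rewrite [RHS]exchange_big.
Qed.

Lemma HMA_ptrB : HMA U rho = \sum_j Defs.eta (prob U (ptrB rho) j).
Proof. by apply: eq_bigr => j _; rewrite pjoint_sumr. Qed.

Lemma HMB_ptrA : HMB U rho = \sum_k Defs.eta (prob U (ptrA rho) k).
Proof. by apply: eq_bigr => k _; rewrite pjoint_suml. Qed.

End Marginals.

Lemma sum_sub_bigmax_le (R : realType) n (F : 'I_n.+1 -> R) (S : {set 'I_n.+1}) :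
  #|S| = n -> \sum_i F i - \big[Num.max/F ord0]_i F i <= \sum_(i in S) F i.
Proof.
move=> card_S; have /cards1P[i0 S'] : #|~: S| == 1%N.
  by have := cardsC S; rewrite card_S card_ord => /eqP; rewrite -[X in _ == X]addn1 eqn_add2l.
rewrite (bigID (mem S)) /= (_ : \sum_(i | i \notin S) F i = \sum_(i in [set i0]) F i).
  by rewrite big_set1; have := le_bigmax (F ord0) F i0; lra.
by apply: eq_bigl => i; rewrite -S' inE.
Qed.

Lemma sum_cmutinf_sub_Imax_le_minS (R : realType) d (M : 'I_d.+1 -> 'M[R[i]]_d)
    (rho : 'M[R[i]]_(d * d)) :
  \sum_i cmutinf (M i) rho - Imax M rho <= minS M rho.
Proof.
apply: (big_ind (fun x => _ <= x)) => [||S]; last by move/eqP; exact: sum_sub_bigmax_le.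
  apply: sum_sub_bigmax_le; rewrite (_ : [set i | i != ord_max] = ~: [set ord_max]).
    by rewrite cardsC1 card_ord.
  by apply/setP => i; rewrite !inE.
by move=> x y x_le y_le; rewrite le_min x_le y_le.
Qed.

Theorem proposition2 (R : realType) (d : nat) (M : 'I_d.+1 -> 'M[R[i]]_d) :
  prime d -> complete_mub M -> ECQC M ->
  forall rho : 'M[R[i]]_(d * d), is_state rho ->
    \sum_(i < d.+1) HMM (M i) rho >=
      2 * ((d.+1)%:R * (log2 (d%:R : R) - 1)) - qmutinf rho - Imax M rho.
Proof.
move=> /prime_gt1 d_gt1 [M_onb M_mub] ecqc rho st_rho.
have HA_ge := mub_entropy_bound d_gt1 M_onb M_mub (ptrB_state st_rho).
have HB_ge := mub_entropy_bound d_gt1 M_onb M_mub (ptrA_state st_rho).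
have I_le := le_trans (sum_cmutinf_sub_Imax_le_minS M rho) (ecqc rho st_rho).
have HMM_E i : HMM (M i) rho = \sum_j Defs.eta (prob (M i) (ptrB rho) j) +
    \sum_j Defs.eta (prob (M i) (ptrA rho) j) - cmutinf (M i) rho.
  by rewrite -HMA_ptrB // -HMB_ptrA // /cmutinf; ring.
by rewrite (eq_bigr _ (fun i _ => HMM_E i)) sumrB big_split /=; lra.
Qed.
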